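(* Let $z^0\in X$, $\gamma\in(0,2)$, $\delta\in[0,1/2)$, and let $\{\sigma_k\},\{\eta_k\}$ be nonnegative with $\sum_k\eta_k<\infty$, $\inf_k\sigma_k>0$; let $z^{k+1}$ be an output of IGPPAstep$(z^k,\sigma_k,\eta_k,\delta,\gamma,M)$ for all $k\ge0$. Assume $T$ satisfies the bounded metric subregularity condition, let $\bar z^0$ be a point of $\Omega$ nearest to $z^0$ in $\|\cdot\|_M$, $r\ge\|\bar z^0\|+\frac{1}{\lambda_{\min}(M)}(\operatorname{dist}_M(z^0,\Omega)+\gamma\sum_k\eta_k)$, and $\kappa_r>0$ with $\operatorname{dist}(z,\Omega)\le\kappa_r\operatorname{dist}(0,T(z))$ for $\|z\|\le r$. Let $\alpha>0$ with $\rho:=\frac{1}{1-\delta}\Big(\sqrt{1-\frac{\min\{\gamma,2\gamma-\gamma^2\}\alpha^2}{\alpha^2+1}}+\delta\big(\frac{\min\{\gamma,1\}}{\sqrt{\alpha^2+1}}+1\big)\Big)<1$ and $C:=\frac{1+\delta}{(1-\delta)(1-\sqrt{1/(\alpha^2+1)})}$. If $\sigma_k\ge\kappa_r\alpha$ for all $k\ge0$, then $\|z^{k+1}-z^k\|_M\le C\rho^k\|z^1-z^0\|_M$ for all $k\ge0$.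
   Context: $X$ is a finite-dimensional real Hilbert space; $T:X\rightrightarrows X$ is maximal monotone with $\Omega:=T^{-1}(0)\neq\emptyset$. $M$ is self-adjoint positive definite with $\lambda_{\max}(M)=1$; $\|z\|_M=\sqrt{\langle z,Mz\rangle}$, $\operatorname{dist}_M(z,D)=\min_{d\in D}\|d-z\|_M$, $\operatorname{dist}=\operatorname{dist}_I$. $\mathcal{J}_{\sigma M^{-1}T}:=(I+\sigma M^{-1}T)^{-1}$. $z^+$ is an output of IGPPAstep$(z,\sigma,\eta,\delta,\gamma,M)$ if $z^+=\gamma w+(1-\gamma)z$ for some $w$ with $\|w-\mathcal{J}_{\sigma M^{-1}T}(z)\|_M\le\min\{\eta,\delta\|w-z\|_M\}$. Bounded metric subregularity: for every $r>0$ there is $\kappa_r>0$ with $\operatorname{dist}(z,\Omega)\le\kappa_r\operatorname{dist}(0,T(z))$ for all $\|z\|\le r$. *)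

(* X = 'cV[R]_n (finite-dimensional real Hilbert space R^n
   with the standard inner product), R : realType. *)
From HB Require Import structures.
From mathcomp Require Import all_boot all_order all_algebra.
From mathcomp Require Import all_classical all_reals.
From mathcomp Require Import topology normedtype sequences.
Set Implicit Arguments. Unset Strict Implicit. Unset Printing Implicit Defensive.
Import Order.TTheory GRing.Theory Num.Theory numFieldNormedType.Exports.
Local Open Scope ring_scope.
Local Open Scope classical_set_scope.

Section Defs.
Variables (R : realType) (n : nat).
Notation X := 'cV[R]_n.

Definition ip (u v : X) : R := (u^T *m v) 0 0.
Definition nrm (u : X) : R := Num.sqrt (ip u u).
Definition nrmM (M : 'M[R]_n) (u : X) : R := Num.sqrt (ip u (M *m u)).

(* set-valued operators are given by their graphs: T z w  <->  w \in T(z) *)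
Definition monotone_op (T : X -> X -> Prop) : Prop :=
  forall z z' w w', T z w -> T z' w' -> 0 <= ip (z - z') (w - w').
Definition maximal_monotone (T : X -> X -> Prop) : Prop :=
  monotone_op T /\
  forall T' : X -> X -> Prop, monotone_op T' ->
    (forall z w, T z w -> T' z w) -> forall z w, T' z w -> T z w.

Definition zeros (T : X -> X -> Prop) : set X := [set z | T z 0].

Definition distM (M : 'M[R]_n) (z : X) (D : set X) : R :=
  inf [set nrmM M (d - z) | d in D].
Definition dist (z : X) (D : set X) : R := inf [set nrm (d - z) | d in D].

(* u = J_{sigma M^{-1} T}(z) = (I + sigma M^{-1} T)^{-1}(z),
   i.e. z \in u + sigma M^{-1} T(u) *)
Definition is_resolvent (T : X -> X -> Prop) (M : 'M[R]_n) (sigma : R)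
  (z u : X) : Prop :=
  exists w, T u w /\ z = u + sigma *: (invmx M *m w).

Definition IGPPAstep (T : X -> X -> Prop) (z : X) (sigma eta delta gamma : R)
  (M : 'M[R]_n) (zp : X) : Prop :=
  exists w J, is_resolvent T M sigma z J /\
    nrmM M (w - J) <= Num.min eta (delta * nrmM M (w - z)) /\
    zp = gamma *: w + (1 - gamma) *: z.

Definition sym_posdef (M : 'M[R]_n) : Prop :=
  M^T = M /\ forall z : X, z != 0 -> 0 < ip z (M *m z).

Definition is_lambda_max (M : 'M[R]_n) (l : R) : Prop :=
  eigenvalue M l /\ forall a, eigenvalue M a -> a <= l.
Definition is_lambda_min (M : 'M[R]_n) (l : R) : Prop :=
  eigenvalue M l /\ forall a, eigenvalue M a -> l <= a.

(* bounded metric subregularity (dist(0,T(z)) = inf over w in T(z), +oo if empty) *)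
Definition subreg_at (T : X -> X -> Prop) (r kappa : R) : Prop :=
  forall z w, nrm z <= r -> T z w -> dist z (zeros T) <= kappa * nrm w.
Definition bounded_metric_subregular (T : X -> X -> Prop) : Prop :=
  forall r, 0 < r -> exists kappa, 0 < kappa /\ subreg_at T r kappa.

End Defs.

From HB Require Import structures.
From mathcomp Require Import all_boot all_order all_algebra.
From mathcomp Require Import all_classical all_reals.
From mathcomp Require Import topology normedtype sequences derive.
From mathcomp Require Import ring lra.
Set Implicit Arguments. Unset Strict Implicit. Unset Printing Implicit Defensive.
Import Order.TTheory GRing.Theory Num.Theory numFieldNormedType.Exports.
Local Open Scope ring_scope.
Local Open Scope classical_set_scope.

(** Write N for the M-norm, D x for dist_M(x, Omega), J for the resolvent of z
  and zh for the exact relaxed step gamma J + (1 - gamma) z.  Firm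
  nonexpansiveness of J in N gives the Fejer property and
  D(J)^2 + N(z - J)^2 <= D(z)^2.  Every resolvent stays in the ball of radius r,
  because the iterates stay Fejer-close to zbar0 and |x| <= N x / lambda_min;
  so subregularity applies and gives alpha D(J) <= N(z - J), hence
  D(J)^2 <= D(z)^2 / (alpha^2 + 1).  Relaxation (through the convexity of Omega
  when gamma < 1) turns this into D(zh) <= s D(z) with
  s = sqrt(1 - min(gamma, 2 gamma - gamma^2) alpha^2 / (alpha^2 + 1)), and the
  relative error delta adds at most gamma delta / (1 - delta) D(z), which keeps
  the factor below rho.  Finally
  (1 - delta) N(z^(k+1) - z^k) <= gamma D(z^k) <= gamma rho^k D(z^0), while the
  first step gives gamma (1 - sqrt(1 / (alpha^2 + 1))) D(z^0) <= (1 + delta) N(z^1 - z^0).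
  The comparisons between |.| and N come from the extreme eigenvalues of M,
  which are the extrema of the Rayleigh quotient on the compact unit sphere. *)

Lemma quadratic_ge0_discr (R : realFieldType) (a b c : R) : 0 <= a ->
  (forall t, 0 <= a * t ^+ 2 + 2 * b * t + c) -> b ^+ 2 <= a * c.
Proof.
move=> a_ge0 hq; have [a0|a_neq0] := eqVneq a 0.
  rewrite a0 in hq *; have [->|b_neq0] := eqVneq b 0; first by rewrite expr2 !mul0r.
  have := hq (- (c + 1) / (2 * b)).
  have -> : 2 * b * (- (c + 1) / (2 * b)) = - (c + 1) by field.
  lra.
have a_gt0 : 0 < a by rewrite lt_def a_neq0.
have := hq (- b / a).
have -> : a * (- b / a) ^+ 2 + 2 * b * (- b / a) + c = c - b ^+ 2 / a by field.
by rewrite subr_ge0 ler_pdivrMr // mulrC.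
Qed.

Lemma sqr_le_mul_sqrt (R : rcfType) (a b c : R) : 0 <= a -> 0 <= b -> 0 <= c ->
  a ^+ 2 <= c * b ^+ 2 -> a <= Num.sqrt c * b.
Proof.
move=> a_ge0 b_ge0 c_ge0 h.
rewrite -(ger0_norm a_ge0) -sqrtr_sqr -(ger0_norm b_ge0) -sqrtr_sqr -sqrtrM //.
by rewrite ler_sqrt // mulr_ge0 ?sqr_ge0.
Qed.

Section InnerProduct.
Variables (R : realType) (n : nat).
Implicit Types (u v w : 'cV[R]_n) (A : 'M[R]_n).

Lemma ipC u v : ip u v = ip v u.
Proof. by rewrite /ip -[u^T *m v]trmxK trmx_mul trmxK mxE. Qed.

Lemma ipDl u v w : ip (u + v) w = ip u w + ip v w.
Proof. by rewrite /ip linearD /= mulmxDl mxE. Qed.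

Lemma ipZl a u w : ip (a *: u) w = a * ip u w.
Proof. by rewrite /ip linearZ /= -scalemxAl mxE. Qed.

Lemma ipNl u w : ip (- u) w = - ip u w.
Proof. by rewrite -scaleN1r ipZl mulN1r. Qed.

Lemma ipDr u v w : ip w (u + v) = ip w u + ip w v.
Proof. by rewrite ipC ipDl !(ipC w). Qed.

Lemma ipZr a u w : ip w (a *: u) = a * ip w u.
Proof. by rewrite ipC ipZl ipC. Qed.

Lemma ipNr u w : ip w (- u) = - ip w u.
Proof. by rewrite ipC ipNl ipC. Qed.

Lemma ip0l w : ip 0 w = 0.
Proof. by rewrite -(scale0r (0 : 'cV[R]_n)) ipZl mul0r. Qed.

Lemma ip0r w : ip w 0 = 0.
Proof. by rewrite ipC ip0l. Qed.

Lemma ip_ge0 u : 0 <= ip u u.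
Proof. by rewrite /ip mxE sumr_ge0 // => i _; rewrite mxE -expr2 sqr_ge0. Qed.

Lemma ip_eq0 u : (ip u u == 0) = (u == 0).
Proof.
apply/eqP/eqP => [|->]; last exact: ip0l.
rewrite /ip mxE => /psumr_eq0P u0; apply/matrixP => i j; rewrite (ord1 j) !mxE.
have /eqP : u^T 0 i * u i 0 = 0 by apply: u0 => // k _; rewrite mxE -expr2 sqr_ge0.
by rewrite mxE -expr2 sqrf_eq0 => /eqP.
Qed.

Lemma ip_gt0 u : (0 < ip u u) = (u != 0).
Proof. by rewrite lt_def ip_ge0 andbT ip_eq0. Qed.

Lemma nrm_ge0 u : 0 <= nrm u.
Proof. exact: sqrtr_ge0. Qed.

Lemma nrm_sqr u : nrm u ^+ 2 = ip u u.
Proof. by rewrite sqr_sqrtr // ip_ge0. Qed.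

Lemma ip_trmx A u v : A^T = A -> ip (A *m u) v = ip u (A *m v).
Proof. by move=> sA; rewrite /ip trmx_mul sA mulmxA. Qed.

Definition ipM A u v := ip u (A *m v).

Lemma ipMC A u v : A^T = A -> ipM A u v = ipM A v u.
Proof. by move=> sA; rewrite /ipM ipC ip_trmx. Qed.

Lemma ipMDl A u v w : ipM A (u + v) w = ipM A u w + ipM A v w.
Proof. exact: ipDl. Qed.

Lemma ipMDr A u v w : ipM A w (u + v) = ipM A w u + ipM A w v.
Proof. by rewrite /ipM mulmxDr ipDr. Qed.

Lemma ipMZl A a u w : ipM A (a *: u) w = a * ipM A u w.
Proof. exact: ipZl. Qed.

Lemma ipMZr A a u w : ipM A w (a *: u) = a * ipM A w u.
Proof. by rewrite /ipM -scalemxAr ipZr. Qed.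

Lemma ipMNl A u w : ipM A (- u) w = - ipM A u w.
Proof. exact: ipNl. Qed.

Lemma ipMNr A u w : ipM A w (- u) = - ipM A w u.
Proof. by rewrite /ipM mulmxN ipNr. Qed.

Definition ipME := (ipMDl, ipMDr, ipMNl, ipMNr, ipMZl, ipMZr).

Lemma ipM1 u v : ipM 1%:M u v = ip u v.
Proof. by rewrite /ipM mul1mx. Qed.

Lemma nrmM1 u : nrmM 1%:M u = nrm u.
Proof. by rewrite /nrmM mul1mx. Qed.

Lemma nrmM_ge0 A u : 0 <= nrmM A u.
Proof. exact: sqrtr_ge0. Qed.

Lemma nrmMZ A a u : nrmM A (a *: u) = `|a| * nrmM A u.
Proof.
rewrite /nrmM -!/(ipM _ _ _) ipMZl ipMZr mulrA -expr2.
by rewrite sqrtrM ?sqr_ge0 // sqrtr_sqr.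
Qed.

Lemma nrmMN A u : nrmM A (- u) = nrmM A u.
Proof. by rewrite -scaleN1r nrmMZ normrN normr1 mul1r. Qed.

Lemma nrmMB A u v : nrmM A (u - v) = nrmM A (v - u).
Proof. by rewrite -nrmMN opprB. Qed.

Lemma nrmM_sqrZ A a u : nrmM A (a *: u) ^+ 2 = a ^+ 2 * nrmM A u ^+ 2.
Proof. by rewrite nrmMZ exprMn real_normK ?num_real. Qed.

Lemma nrmZ a u : nrm (a *: u) = `|a| * nrm u.
Proof. by rewrite -!nrmM1 nrmMZ. Qed.

End InnerProduct.

Arguments ipM {R n}.

Section PositiveDefinite.
Variables (R : realType) (n : nat) (M : 'M[R]_n).
Hypothesis hM : sym_posdef M.
Implicit Types (u v w : 'cV[R]_n).
Local Notation N := (nrmM M).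

Lemma ipM_ge0 u : 0 <= ipM M u u.
Proof.
have [->|u_neq0] := eqVneq u 0; first by rewrite /ipM mulmx0 ip0r.
exact/ltW/hM.2.
Qed.

Lemma nrmM_sqr u : N u ^+ 2 = ipM M u u.
Proof. by rewrite sqr_sqrtr // ipM_ge0. Qed.

Lemma ipM_CS u v : ipM M u v <= N u * N v.
Proof.
have CS : ipM M u v ^+ 2 <= N u ^+ 2 * N v ^+ 2.
  rewrite mulrC !nrmM_sqr; apply: quadratic_ge0_discr; first exact: ipM_ge0.
  move=> t; have -> : ipM M v v * t ^+ 2 + 2 * ipM M u v * t + ipM M u u =
                      ipM M (u + t *: v) (u + t *: v).
    by rewrite !ipME (ipMC v u hM.1); ring.
  exact: ipM_ge0.
move: CS; rewrite -exprMn.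
have := mulr_ge0 (nrmM_ge0 M u) (nrmM_ge0 M v); set p := N u * N v; nra.
Qed.

Lemma nrmM_sqr_addr u v : N (u + v) ^+ 2 = N u ^+ 2 + N v ^+ 2 + 2 * ipM M u v.
Proof. by rewrite !nrmM_sqr !ipME (ipMC v u hM.1); ring. Qed.

Lemma nrmM_sqr_convex (t : R) u v : N (t *: u + (1 - t) *: v) ^+ 2 =
  t * N u ^+ 2 + (1 - t) * N v ^+ 2 - t * (1 - t) * N (u - v) ^+ 2.
Proof. by rewrite !nrmM_sqr !ipME (ipMC v u hM.1); ring. Qed.

Lemma nrmM_triangle u v : N (u + v) <= N u + N v.
Proof.
rewrite -ler_sqr ?nnegrE ?addr_ge0 ?nrmM_ge0 // nrmM_sqr_addr.
have := ipM_CS u v; lra.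
Qed.

Lemma nrmM_sub_triangle u v w : N (u - w) <= N (u - v) + N (v - w).
Proof. by rewrite -[u - w](subrKA v) nrmM_triangle. Qed.

Lemma posdef_unitmx : M \in unitmx.
Proof.
rewrite unitmxE unitfE; apply/negP => /det0P [v v_neq0 vM].
have Mv : M *m v^T = 0 by rewrite -hM.1 -trmx_mul vM trmx0.
by have := hM.2 v^T; rewrite trmx_eq0 v_neq0 Mv ip0r ltxx => /(_ isT).
Qed.

End PositiveDefinite.

Lemma sym_posdef1 (R : realType) (n : nat) : sym_posdef (1%:M : 'M[R]_n).
Proof. by split; [exact: tr_scalar_mx | move=> u; rewrite mul1mx ip_gt0]. Qed.

Lemma nrm_triangle (R : realType) (n : nat) (u v : 'cV[R]_n) :
  nrm (u + v) <= nrm u + nrm v.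
Proof. by rewrite -!nrmM1; apply/nrmM_triangle/sym_posdef1. Qed.

Section DistanceM.
Variables (R : realType) (n : nat) (M : 'M[R]_n) (Om : set 'cV[R]_n).
Hypothesis Om_neq0 : Om !=set0.
Implicit Types (x y p : 'cV[R]_n).
Local Notation N := (nrmM M).
Local Notation D x := (distM M x Om).

Lemma distM_le x p : Om p -> D x <= N (p - x).
Proof.
move=> Om_p; apply: ge_inf; last by exists p.
by exists 0 => _ [q _ <-]; exact: nrmM_ge0.
Qed.

Lemma distM_glb x (a : R) : (forall p, Om p -> a <= N (p - x)) -> a <= D x.
Proof.
move=> h; case: Om_neq0 => p0 Om_p0.
by apply: lb_le_inf; [exists (N (p0 - x)), p0 | move=> _ [q Om_q <-]; exact: h].
Qed.

Lemma distM_ge0 x : 0 <= D x.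
Proof. by apply: distM_glb => p _; exact: nrmM_ge0. Qed.

Lemma distM_sqr_le x p : Om p -> D x ^+ 2 <= N (p - x) ^+ 2.
Proof. by move=> Om_p; rewrite ler_sqr ?nnegrE ?distM_ge0 ?nrmM_ge0 ?distM_le. Qed.

Lemma distM_sqr_glb x (u c a : R) : 0 < u ->
  (forall p, Om p -> a <= u * N (p - x) ^+ 2 + c) -> a <= u * D x ^+ 2 + c.
Proof.
move=> u_gt0 h; rewrite -lerBlDr -ler_pdivrMl //.
have [a_le|a_gt] := lerP (u^-1 * (a - c)) 0; first exact: le_trans a_le (sqr_ge0 _).
rewrite -[_ * _]sqr_sqrtr ?(ltW a_gt) // ler_sqr ?nnegrE ?sqrtr_ge0 ?distM_ge0 //.
apply: distM_glb => p Om_p.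
rewrite -(ger0_norm (nrmM_ge0 M (p - x))) -sqrtr_sqr ler_sqrt ?sqr_ge0 //.
by rewrite ler_pdivrMl // lerBlDr h.
Qed.

Lemma distM_le_dist x : (forall u, N u <= nrm u) -> D x <= dist x Om.
Proof.
move=> N_le; case: Om_neq0 => p0 Om_p0.
apply: lb_le_inf; first by exists (nrm (p0 - x)), p0.
by move=> _ [p Om_p <-]; exact: le_trans (distM_le x Om_p) (N_le _).
Qed.

Lemma distM_lipschitz x y : sym_posdef M -> D y <= D x + N (y - x).
Proof.
move=> hM; rewrite -lerBlDr; apply: distM_glb => p Om_p.
rewrite lerBlDr (nrmMB _ y); apply: le_trans (distM_le y Om_p) _.
exact: nrmM_sub_triangle.
Qed.

End DistanceM.

Section Rayleigh.
Variables (R : realType) (n : nat) (A : 'M[R]_n).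
Hypothesis sA : A^T = A.

Lemma ipM_rV_continuous (B : 'M[R]_n) : continuous (fun x : 'rV[R]_n => ipM B x^T x^T).
Proof.
have -> : (fun x : 'rV[R]_n => ipM B x^T x^T) =
          (fun x => \sum_i x 0 i * \sum_j B i j * x 0 j).
  apply: funext => x; rewrite /ipM /ip mxE; apply: eq_bigr => i _.
  by rewrite !mxE; congr (_ * _); apply: eq_bigr => j _; rewrite mxE.
apply: continuous_big => [|i _ x]; first exact: add_continuous.
apply: continuousM; first exact: coord_continuous.
apply: continuous_big => [|j _ y]; first exact: add_continuous.
by apply: continuousM; [exact: cst_continuous | exact: coord_continuous].
Qed.

Lemma unit_sphere_compact : compact [set x : 'rV[R]_n | ip x^T x^T = 1].
Proof.
apply: bounded_closed_compact.
  suff : [bounded x | x in [set x : 'rV[R]_n | ip x^T x^T = 1]] by [].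
  rewrite /bounded_near; near=> K => x /= x1.
  apply: (@le_trans _ _ 1); last by near: K; exact: nbhs_pinfty_ge.
  rewrite /Num.norm /= mx_normrE; apply: bigmax_le => // ij _.
  have : x ij.1 ij.2 ^+ 2 <= 1.
    move: x1; rewrite /ip mxE => <-.
    rewrite (bigD1 ij.2) //= !mxE (ord1 ij.1) -expr2 lerDl.
    by apply: sumr_ge0 => k _; rewrite !mxE -expr2 sqr_ge0.
  rewrite -(real_normK (num_real _)); have := normr_ge0 (x ij.1 ij.2); nra.
apply: (@preimage_closed _ _ (fun x : 'rV[R]_n => ip x^T x^T) [set 1]).
  by move=> x _; have := @ipM_rV_continuous 1%:M x; under eq_fun do rewrite ipM1.
exact: closed_eq.
Unshelve. all: by end_near.
Qed.

Lemma rayleigh_min_attained : (exists c : 'cV[R]_n, c != 0) ->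
  exists2 u : 'cV[R]_n, ip u u = 1 & forall c, ipM A u u * ip c c <= ipM A c c.
Proof.
move=> [c0 c0_neq0].
pose normalize (c : 'cV[R]_n) := (Num.sqrt (ip c c))^-1 *: c.
have normalizeK c : c != 0 -> ip (normalize c) (normalize c) = 1.
  move=> c_neq0; rewrite ipZl ipZr mulrA -expr2 exprVn sqr_sqrtr ?ip_ge0 //.
  by rewrite mulVf // ip_eq0.
have S_neq0 : [set x : 'rV[R]_n | ip x^T x^T = 1] !=set0.
  by exists (normalize c0)^T; rewrite /= trmxK normalizeK.
have [x] := EVT_min_rV S_neq0 unit_sphere_compact
  (continuous_subspaceT (@ipM_rV_continuous A)).
rewrite inE /= => x1 xmin; exists x^T => // c.
have [->|c_neq0] := eqVneq c 0; first by rewrite ip0l /ipM mulmx0 ip0r mulr0.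
have := xmin (normalize c)^T; rewrite inE /= trmxK normalizeK // => /(_ erefl).
rewrite ipMZl ipMZr mulrA -expr2 exprVn sqr_sqrtr ?ip_ge0 //.
by rewrite mulrC ler_pdivlMr ?ip_gt0.
Qed.

Lemma psd_isotropic_kernel (B : 'M[R]_n) u : B^T = B ->
  (forall c, 0 <= ipM B c c) -> ipM B u u = 0 -> B *m u = 0.
Proof.
move=> sB B_psd Buu; set v := B *m u.
have : ip v v ^+ 2 <= ipM B v v * 0.
  apply: quadratic_ge0_discr => // t.
  have vu : ipM B v u = ip v v by [].
  have -> : ipM B v v * t ^+ 2 + 2 * ip v v * t + 0 =
            ipM B (u + t *: v) (u + t *: v).
    by rewrite !ipME Buu (ipMC u v sB) vu; ring.
  exact: B_psd.
by rewrite mulr0 => vv; apply/eqP; rewrite -ip_eq0 -sqrf_eq0 eq_le vv sqr_ge0.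
Qed.

Lemma sym_eigenvalue_rayleigh_min : (exists c : 'cV[R]_n, c != 0) ->
  exists2 mu, eigenvalue A mu & forall c, mu * ip c c <= ipM A c c.
Proof.
move=> /rayleigh_min_attained [u u1 umin]; set mu := ipM A u u.
exists mu => //; pose B := A - mu%:M.
have ipMB c : ipM B c c = ipM A c c - mu * ip c c.
  by rewrite /ipM mulmxBl ipDr ipNr mul_scalar_mx ipZr.
have Bu : B *m u = 0.
  apply: psd_isotropic_kernel => [|c|]; last by rewrite ipMB u1 mulr1 subrr.
    by rewrite linearB /= tr_scalar_mx sA.
  by rewrite ipMB subr_ge0.
have Au : A *m u = mu *: u.
  by apply/eqP; rewrite -subr_eq0 -mul_scalar_mx -mulmxBl Bu.
apply/eigenvalueP; exists u^T; first by rewrite -{1}sA -trmx_mul Au linearZ.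
by rewrite trmx_eq0 -ip_eq0 u1 oner_eq0.
Qed.

Lemma eigenvalue_col a : eigenvalue A a ->
  exists2 c : 'cV[R]_n, c != 0 & A *m c = a *: c.
Proof.
move=> /eigenvalueP [v vA v_neq0]; exists v^T; first by rewrite trmx_eq0.
by rewrite -sA -trmx_mul vA linearZ.
Qed.

End Rayleigh.

Section ExtremeEigenvalues.
Variables (R : realType) (n : nat) (A : 'M[R]_n).
Hypothesis sA : A^T = A.

Lemma lambda_max_rayleigh l : is_lambda_max A l -> forall u, ipM A u u <= l * ip u u.
Proof.
move=> [Al Al_max] u; have [c c_neq0 _] := eigenvalue_col sA Al.
have sNA : (- A)^T = - A by rewrite linearN /= sA.
have [mu /eigenvalueP [v vA v_neq0] mu_min] := sym_eigenvalue_rayleigh_min sNA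
  (ex_intro _ c c_neq0).
have /Al_max mu_le : eigenvalue A (- mu).
  by apply/eigenvalueP; exists v; rewrite // scaleNr -vA mulmxN opprK.
have := mu_min u; rewrite /ipM mulNmx ipNr -/(ipM A u u).
have := ip_ge0 u; nra.
Qed.

Lemma lambda_min_rayleigh l : is_lambda_min A l -> forall u, l * ip u u <= ipM A u u.
Proof.
move=> [Al Al_min] u; have [c c_neq0 _] := eigenvalue_col sA Al.
have [mu /Al_min l_le mu_min] := sym_eigenvalue_rayleigh_min sA (ex_intro _ c c_neq0).
exact: le_trans (ler_wpM2r (ip_ge0 u) l_le) (mu_min u).
Qed.

End ExtremeEigenvalues.

Section NormalizedMetric.
Variables (R : realType) (n : nat) (M : 'M[R]_n).
Hypotheses (hM : sym_posdef M) (hMmax : is_lambda_max M 1).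
Implicit Types (u : 'cV[R]_n).

Lemma nrmM_le_nrm u : nrmM M u <= nrm u.
Proof.
have := lambda_max_rayleigh hM.1 hMmax u; rewrite mul1r => uMu.
by rewrite ler_sqrt ?ip_ge0.
Qed.

Lemma nrm_mulmx_le_nrmM u : nrm (M *m u) <= nrmM M u.
Proof.
have : nrm (M *m u) ^+ 2 <= nrmM M u * nrm (M *m u).
  rewrite nrm_sqr ip_trmx ?hM.1 //; apply: le_trans (ipM_CS hM u (M *m u)) _.
  by rewrite ler_wpM2l ?nrmM_ge0 ?nrmM_le_nrm.
have := nrmM_ge0 M u; have := nrm_ge0 (M *m u); nra.
Qed.

Lemma lambda_min_gt0 l : is_lambda_min M l -> 0 < l.
Proof.
move=> [Ml _]; have [c c_neq0 Mc] := eigenvalue_col hM.1 Ml.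
by have := hM.2 c c_neq0; rewrite Mc ipZr pmulr_lgt0 // ip_gt0.
Qed.

Lemma nrm_le_nrmM l : is_lambda_min M l -> forall u, nrm u <= nrmM M u / l.
Proof.
move=> Ml u; have l_gt0 := lambda_min_gt0 Ml.
have l_le1 : l <= 1 by apply: Ml.2; exact: hMmax.1.
rewrite ler_pdivlMr // -ler_sqr ?nnegrE ?mulr_ge0 ?nrm_ge0 ?nrmM_ge0 ?(ltW l_gt0) //.
rewrite nrmM_sqr //; apply: le_trans _ (lambda_min_rayleigh hM.1 Ml u).
rewrite -nrm_sqr exprMn mulrC; apply: ler_wpM2r; first exact: sqr_ge0.
by rewrite expr2 ler_piMl // ltW.
Qed.

End NormalizedMetric.

Lemma maximal_monotone_zeros_convex (R : realType) (n : nat)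
    (T : 'cV[R]_n -> 'cV[R]_n -> Prop) p1 p2 (t : R) :
  maximal_monotone T -> zeros T p1 -> zeros T p2 -> 0 <= t <= 1 ->
  zeros T (t *: p1 + (1 - t) *: p2).
Proof.
move=> [T_mono T_max] Tp1 Tp2 /andP[t_ge0 t_le1]; set p := _ + _.
have p_mono z w : T z w -> 0 <= ip (z - p) w.
  move=> Tzw; have -> : z - p = t *: (z - p1) + (1 - t) *: (z - p2).
    by apply/matrixP => i j; rewrite !mxE; ring.
  rewrite ipDl !ipZl; have := T_mono z p1 w 0 Tzw Tp1.
  have := T_mono z p2 w 0 Tzw Tp2; rewrite !subr0; nra.
apply: (T_max (fun z w => T z w \/ z = p /\ w = 0)) => [|z w|]; last by right.
- move=> z z' w w' [Tzw|[-> ->]] [Tzw'|[-> ->]].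
  + exact: T_mono.
  + by rewrite subr0; exact: p_mono.
  + by rewrite sub0r -opprB ipNl ipNr opprK; exact: p_mono.
  + by rewrite subrr ip0l.
- by left.
Qed.

Section ResolventStep.
Variables (R : realType) (n : nat) (T : 'cV[R]_n -> 'cV[R]_n -> Prop) (M : 'M[R]_n).
Hypotheses (hT : maximal_monotone T) (hM : sym_posdef M) (Om_neq0 : zeros T !=set0).
Local Notation N := (nrmM M).
Local Notation D x := (distM M x (zeros T)).

Variables (sigma : R) (z J v : 'cV[R]_n).
Hypotheses (sigma_ge0 : 0 <= sigma) (TJv : T J v).
Hypothesis zJ : z = J + sigma *: (invmx M *m v).

Lemma resolvent_residual : M *m (z - J) = sigma *: v.
Proof.
by rewrite zJ addrAC subrr add0r -scalemxAr mulmxA mulmxV ?mul1mx ?posdef_unitmx.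
Qed.

Lemma resolvent_monotone p : zeros T p -> 0 <= ipM M (J - p) (z - J).
Proof.
move=> Tp; rewrite /ipM resolvent_residual ipZr mulr_ge0 //.
by have := hT.1 J p v 0 TJv Tp; rewrite subr0.
Qed.

Lemma resolvent_firm p : zeros T p ->
  N (J - p) ^+ 2 + N (z - J) ^+ 2 <= N (z - p) ^+ 2.
Proof.
move=> Tp; have -> : z - p = (J - p) + (z - J) by rewrite [RHS]addrC subrKA.
by rewrite [leRHS]nrmM_sqr_addr // lerDl mulr_ge0 ?resolvent_monotone.
Qed.

Lemma resolvent_nonexpansive p : zeros T p -> N (J - p) <= N (z - p).
Proof.
move=> Tp; rewrite -ler_sqr ?nnegrE ?nrmM_ge0 //.
by have := resolvent_firm Tp; have := sqr_ge0 (N (z - J)); lra.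
Qed.

Lemma resolvent_distM : D J ^+ 2 + N (z - J) ^+ 2 <= D z ^+ 2.
Proof.
rewrite -[D z ^+ 2]mul1r -[1 * _]addr0.
apply: (distM_sqr_glb Om_neq0 ltr01) => p Tp; rewrite mul1r addr0 (nrmMB _ p).
by apply: le_trans (resolvent_firm Tp); rewrite lerD2r (nrmMB _ J) distM_sqr_le.
Qed.

Lemma resolvent_le_distM : N (z - J) <= D z.
Proof.
rewrite -ler_sqr ?nnegrE ?nrmM_ge0 ?distM_ge0 //.
by have := resolvent_distM; have := sqr_ge0 (D J); lra.
Qed.

Variables (r kappa alpha : R).
Hypotheses (hMmax : is_lambda_max M 1) (kappa_gt0 : 0 < kappa) (alpha_gt0 : 0 < alpha).
Hypotheses (kappa_alpha_le : kappa * alpha <= sigma) (subreg : subreg_at T r kappa).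
Hypothesis J_le_r : nrm J <= r.

Lemma resolvent_subreg : alpha * D J <= N (z - J).
Proof.
have DJ_le : D J <= kappa * nrm v.
  exact: le_trans (distM_le_dist Om_neq0 _ (nrmM_le_nrm hM hMmax)) (subreg J_le_r TJv).
have sv_le : sigma * nrm v <= N (z - J).
  by rewrite -(ger0_norm sigma_ge0) -nrmZ -resolvent_residual nrm_mulmx_le_nrmM.
rewrite -(ler_pM2l kappa_gt0) mulrA.
apply: le_trans (ler_wpM2r (distM_ge0 M Om_neq0 J) kappa_alpha_le) _.
apply: le_trans (ler_wpM2l sigma_ge0 DJ_le) _.
by rewrite mulrCA; apply: ler_wpM2l => //; apply: ltW.
Qed.

Lemma resolvent_distM_le : D J ^+ 2 <= D z ^+ 2 / (alpha ^+ 2 + 1).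
Proof.
rewrite ler_pdivlMr ?ltr_wpDl ?sqr_ge0 //.
have : (alpha * D J) ^+ 2 <= N (z - J) ^+ 2.
  rewrite ler_sqr ?nnegrE ?mulr_ge0 ?nrmM_ge0 ?distM_ge0 ?(ltW alpha_gt0) //.
  exact: resolvent_subreg.
by have := resolvent_distM; rewrite exprMn; lra.
Qed.

Section Relaxation.
Variable gamma : R.
Hypotheses (gamma_gt0 : 0 < gamma) (gamma_lt2 : gamma < 2).
Local Notation zh := (gamma *: J + (1 - gamma) *: z).
Local Notation m := (Num.min gamma (2 * gamma - gamma ^+ 2)).

Lemma relaxed_sub p : zh - p = (J - p) + (1 - gamma) *: (z - J).
Proof. by apply/matrixP => i j; rewrite !mxE; ring. Qed.

Lemma relaxed_fejer p : zeros T p -> N (zh - p) <= N (z - p).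
Proof.
move=> Tp; rewrite -ler_sqr ?nnegrE ?nrmM_ge0 // relaxed_sub.
have -> : z - p = (J - p) + (z - J) by rewrite [RHS]addrC subrKA.
rewrite (nrmM_sqr_addr hM (J - p) (z - J)) (nrmM_sqr_addr hM (J - p) ((1 - gamma) *: _)).
rewrite nrmM_sqrZ // ipMZr.
have g2 : 0 <= gamma * (2 - gamma) by rewrite mulr_ge0 ?subr_ge0 // ltW.
have := resolvent_monotone Tp; have := sqr_ge0 (N (z - J)); nra.
Qed.

Lemma relaxed_distM_ge1 : 1 <= gamma ->
  D zh ^+ 2 <= D J ^+ 2 + (1 - gamma) ^+ 2 * N (z - J) ^+ 2.
Proof.
move=> g_ge1; rewrite -[D J ^+ 2]mul1r.
apply: (distM_sqr_glb Om_neq0 ltr01) => p Tp; rewrite mul1r.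
apply: le_trans (distM_sqr_le M Om_neq0 _ Tp) _.
rewrite nrmMB relaxed_sub (nrmMB _ p).
rewrite nrmM_sqr_addr // nrmM_sqrZ // ipMZr.
have := resolvent_monotone Tp; nra.
Qed.

Lemma relaxed_distM_lt1 : gamma < 1 ->
  D zh ^+ 2 <= gamma * D J ^+ 2 + (1 - gamma) * D z ^+ 2.
Proof.
move=> g_lt1; have g1_gt0 : 0 < 1 - gamma by rewrite subr_gt0.
have conv p1 p2 : zeros T p1 -> zeros T p2 ->
    D zh ^+ 2 <= gamma * N (p2 - J) ^+ 2 + (1 - gamma) * N (p1 - z) ^+ 2.
  move=> Tp1 Tp2.
  have Tp : zeros T (gamma *: p2 + (1 - gamma) *: p1).
    by apply: maximal_monotone_zeros_convex => //; rewrite (ltW gamma_gt0) (ltW g_lt1).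
  apply: le_trans (distM_sqr_le M Om_neq0 _ Tp) _.
  have -> : gamma *: p2 + (1 - gamma) *: p1 - zh =
            gamma *: (p2 - J) + (1 - gamma) *: (p1 - z).
    by apply/matrixP => i j; rewrite !mxE; ring.
  rewrite nrmM_sqr_convex // lerBlDr lerDl.
  by rewrite mulr_ge0 ?sqr_ge0 // mulr_ge0 // ltW.
have conv1 p1 : zeros T p1 ->
    D zh ^+ 2 <= gamma * D J ^+ 2 + (1 - gamma) * N (p1 - z) ^+ 2.
  by move=> Tp1; apply: (distM_sqr_glb Om_neq0 gamma_gt0) => p2 Tp2; exact: conv.
rewrite [leRHS]addrC; apply: (distM_sqr_glb Om_neq0 g1_gt0) => p1 Tp1.
by rewrite [leRHS]addrC; exact: conv1.
Qed.

Lemma relaxed_distM : D zh ^+ 2 <= m * D J ^+ 2 + (1 - m) * D z ^+ 2.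
Proof.
have [g_ge1|g_lt1] := lerP 1 gamma.
  rewrite min_r; last by nra.
  apply: le_trans (relaxed_distM_ge1 g_ge1) _.
  by have := resolvent_distM; have := sqr_ge0 (1 - gamma); nra.
by rewrite min_l; [exact: relaxed_distM_lt1 | have := gamma_gt0; nra].
Qed.

Lemma relax_weight_ge0 : 0 <= m.
Proof.
by rewrite le_min (ltW gamma_gt0) /=; have := gamma_gt0; have := gamma_lt2; nra.
Qed.

Lemma relax_weight_le1 : m <= 1.
Proof. by rewrite ge_min; apply/orP; right; have := sqr_ge0 (gamma - 1); nra. Qed.

Lemma relax_rate_sqr :
  1 - m * alpha ^+ 2 / (alpha ^+ 2 + 1) = 1 - m + m / (alpha ^+ 2 + 1).
Proof. by field; rewrite gt_eqF // ltr_wpDl ?sqr_ge0. Qed.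

Lemma relax_rate_sqr_ge0 : 0 <= 1 - m * alpha ^+ 2 / (alpha ^+ 2 + 1).
Proof.
rewrite relax_rate_sqr addr_ge0 ?subr_ge0 ?relax_weight_le1 //.
by rewrite divr_ge0 ?relax_weight_ge0 // addr_ge0 ?sqr_ge0.
Qed.

Lemma relaxed_distM_contract :
  D zh <= Num.sqrt (1 - m * alpha ^+ 2 / (alpha ^+ 2 + 1)) * D z.
Proof.
apply: sqr_le_mul_sqrt; rewrite ?distM_ge0 ?relax_rate_sqr_ge0 //.
apply: le_trans relaxed_distM _.
have mDJ := ler_wpM2l relax_weight_ge0 resolvent_distM_le.
by rewrite relax_rate_sqr [leRHS]mulrDl [leRHS]addrC lerD2r mulrAC -mulrA.
Qed.

Lemma gamma_le_1_add_rate :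
  gamma <= 1 + Num.sqrt (1 - m * alpha ^+ 2 / (alpha ^+ 2 + 1)).
Proof.
have [g_le1|g_gt1] := lerP gamma 1.
  by apply: le_trans g_le1 _; rewrite lerDl sqrtr_ge0.
have g1_ge0 : 0 <= gamma - 1 by rewrite subr_ge0 ltW.
rewrite -lerBlDl -(ger0_norm g1_ge0) -sqrtr_sqr ler_sqrt ?relax_rate_sqr_ge0 //.
rewrite relax_rate_sqr min_r; last by nra.
have : 0 <= (2 * gamma - gamma ^+ 2) / (alpha ^+ 2 + 1).
  apply: divr_ge0; first by have := gamma_lt2; nra.
  by rewrite addr_ge0 ?sqr_ge0.
nra.
Qed.

Section InexactStep.
Variables (delta eta : R) (w zp : 'cV[R]_n).
Hypotheses (delta_ge0 : 0 <= delta) (delta_lt1 : delta < 1).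
Hypothesis w_err : N (w - J) <= Num.min eta (delta * N (w - z)).
Hypothesis zp_def : zp = gamma *: w + (1 - gamma) *: z.

Lemma inexact_err_le_eta : N (w - J) <= eta.
Proof. by move: w_err; rewrite le_min => /andP[]. Qed.

Lemma inexact_err_le_move : N (w - J) <= delta * N (w - z).
Proof. by move: w_err; rewrite le_min => /andP[]. Qed.

Lemma inexact_err_le : (1 - delta) * N (w - J) <= delta * N (z - J).
Proof.
have := nrmM_sub_triangle hM w J z; rewrite (nrmMB _ J z).
have := inexact_err_le_move; have := delta_ge0; nra.
Qed.

Lemma inexact_move_le : (1 - delta) * N (w - z) <= N (z - J).
Proof.
have := nrmM_sub_triangle hM w J z; rewrite (nrmMB _ J z).
have := inexact_err_le_move; lra.
Qed.

Lemma inexact_relaxed_gap : N (zp - zh) = gamma * N (w - J).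
Proof.
have -> : zp - zh = gamma *: (w - J).
  by rewrite zp_def; apply/matrixP => i j; rewrite !mxE; ring.
by rewrite nrmMZ ger0_norm // ltW.
Qed.

Lemma inexact_step_eq : N (zp - z) = gamma * N (w - z).
Proof.
have -> : zp - z = gamma *: (w - z).
  by rewrite zp_def; apply/matrixP => i j; rewrite !mxE; ring.
by rewrite nrmMZ ger0_norm // ltW.
Qed.

Lemma inexact_fejer p : zeros T p -> N (zp - p) <= N (z - p) + gamma * eta.
Proof.
move=> Tp; apply: le_trans (nrmM_sub_triangle hM zp zh p) _.
rewrite inexact_relaxed_gap addrC; apply: lerD; first exact: relaxed_fejer.
by rewrite ler_pM2l // inexact_err_le_eta.
Qed.

Lemma inexact_step_le_distM : (1 - delta) * N (zp - z) <= gamma * D z.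
Proof.
rewrite inexact_step_eq mulrCA ler_pM2l //.
exact: le_trans inexact_move_le resolvent_le_distM.
Qed.

Lemma inexact_distM_contract :
  D zp <= (Num.sqrt (1 - m * alpha ^+ 2 / (alpha ^+ 2 + 1))
           + gamma * delta / (1 - delta)) * D z.
Proof.
apply: le_trans (distM_lipschitz Om_neq0 zh zp hM) _.
rewrite inexact_relaxed_gap mulrDl; apply: lerD; first exact: relaxed_distM_contract.
have -> : gamma * delta / (1 - delta) * D z = gamma * (delta * D z / (1 - delta)) by ring.
rewrite ler_pM2l // ler_pdivlMr ?subr_gt0 // mulrC.
exact: le_trans inexact_err_le (ler_wpM2l delta_ge0 resolvent_le_distM).
Qed.

Lemma inexact_step_ge_distM :
  gamma * (1 - Num.sqrt (1 / (alpha ^+ 2 + 1))) * D z <= (1 + delta) * N (zp - z).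
Proof.
have DJ_le : D J <= Num.sqrt (1 / (alpha ^+ 2 + 1)) * D z.
  apply: sqr_le_mul_sqrt; rewrite ?distM_ge0 ?divr_ge0 ?ler01 ?addr_ge0 ?sqr_ge0 //.
  by rewrite mul1r mulrC resolvent_distM_le.
have W_le : N (z - J) <= (1 + delta) * N (w - z).
  have := nrmM_sub_triangle hM z w J; rewrite (nrmMB _ z w).
  have := inexact_err_le_move; lra.
have := distM_lipschitz Om_neq0 J z hM.
rewrite inexact_step_eq mulrCA -mulrA ler_pM2l //; lra.
Qed.

End InexactStep.

End Relaxation.

End ResolventStep.

(* [q] is slack: the contraction factor actually obtained for one step is the
   left-hand side. *)
Lemma inexact_rate_le (R : realFieldType) (s g d q : R) :
  0 <= d -> d < 1 -> 0 <= q -> g <= 1 + s ->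
  s + g * d / (1 - d) <= (1 - d)^-1 * (s + d * (q + 1)).
Proof.
move=> d_ge0 d_lt1 q_ge0 g_le; have d1_gt0 : 0 < 1 - d by rewrite subr_gt0.
have -> : s + g * d / (1 - d) = (1 - d)^-1 * ((1 - d) * s + g * d).
  by field; rewrite gt_eqF.
by rewrite ler_pM2l ?invr_gt0 //; nra.
Qed.

Section IGPPAStep.
Variables (R : realType) (n : nat) (T : 'cV[R]_n -> 'cV[R]_n -> Prop) (M : 'M[R]_n).
Hypotheses (hT : maximal_monotone T) (hM : sym_posdef M) (Om_neq0 : zeros T !=set0).
Variables (gamma delta : R).
Hypotheses (gamma_gt0 : 0 < gamma) (gamma_lt2 : gamma < 2).
Hypotheses (delta_ge0 : 0 <= delta) (delta_lt1 : delta < 1).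
Variables (sigma eta : R) (z zp : 'cV[R]_n).
Hypothesis step : IGPPAstep T z sigma eta delta gamma M zp.
Local Notation N := (nrmM M).
Local Notation D x := (distM M x (zeros T)).

Lemma IGPPAstep_fejer p : 0 <= sigma -> zeros T p ->
  N (zp - p) <= N (z - p) + gamma * eta.
Proof.
move=> sigma_ge0 Tp; have [w [J [[v [TJv zJ]] [w_err zp_def]]]] := step.
exact: (inexact_fejer hT hM sigma_ge0 TJv zJ gamma_gt0 gamma_lt2 w_err zp_def Tp).
Qed.

Lemma IGPPAstep_le_distM : 0 <= sigma -> (1 - delta) * N (zp - z) <= gamma * D z.
Proof.
move=> sigma_ge0; have [w [J [[v [TJv zJ]] [w_err zp_def]]]] := step.
exact: (inexact_step_le_distM hT hM Om_neq0 sigma_ge0 TJv zJ gamma_gt0 w_err zp_def).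
Qed.

Variables (r kappa alpha : R).
Hypotheses (hMmax : is_lambda_max M 1) (kappa_gt0 : 0 < kappa) (alpha_gt0 : 0 < alpha).
Hypotheses (kappa_alpha_le : kappa * alpha <= sigma) (subreg : subreg_at T r kappa).
Hypothesis ball : forall x, (forall p, zeros T p -> N (x - p) <= N (z - p)) -> nrm x <= r.

Lemma IGPPAstep_distM_contract : D zp <= (1 - delta)^-1 *
    (Num.sqrt (1 - Num.min gamma (2 * gamma - gamma ^+ 2) * alpha ^+ 2 / (alpha ^+ 2 + 1))
     + delta * (Num.min gamma 1 / Num.sqrt (alpha ^+ 2 + 1) + 1)) * D z.
Proof.
have sigma_ge0 : 0 <= sigma by apply: le_trans kappa_alpha_le; rewrite mulr_ge0 // ltW.
have [w [J [[v [TJv zJ]] [w_err zp_def]]]] := step.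
have J_le_r : nrm J <= r.
  by apply: ball => p; exact: (resolvent_nonexpansive hT hM sigma_ge0 TJv zJ).
apply: le_trans (inexact_distM_contract hT hM Om_neq0 sigma_ge0 TJv zJ hMmax
  kappa_gt0 alpha_gt0 kappa_alpha_le subreg J_le_r gamma_gt0 gamma_lt2 delta_ge0
  delta_lt1 w_err zp_def) _.
apply: ler_wpM2r; first exact: distM_ge0.
apply: inexact_rate_le => //; last exact: gamma_le_1_add_rate.
by rewrite divr_ge0 ?sqrtr_ge0 // le_min ler01 ltW.
Qed.

Lemma IGPPAstep_ge_distM :
  gamma * (1 - Num.sqrt (1 / (alpha ^+ 2 + 1))) * D z <= (1 + delta) * N (zp - z).
Proof.
have sigma_ge0 : 0 <= sigma by apply: le_trans kappa_alpha_le; rewrite mulr_ge0 // ltW.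
have [w [J [[v [TJv zJ]] [w_err zp_def]]]] := step.
have J_le_r : nrm J <= r.
  by apply: ball => p; exact: (resolvent_nonexpansive hT hM sigma_ge0 TJv zJ).
exact: (inexact_step_ge_distM hT hM Om_neq0 sigma_ge0 TJv zJ hMmax kappa_gt0
  alpha_gt0 kappa_alpha_le subreg J_le_r gamma_gt0 w_err zp_def).
Qed.

End IGPPAStep.

Lemma series_le_limn (R : realType) (u : R ^nat) :
  (forall k, 0 <= u k) -> cvgn (series u) -> forall k, series u k <= limn (series u).
Proof.
move=> u_ge0 u_cvg; apply: nondecreasing_cvgn_le => //.
by apply/nondecreasing_seqP => k; rewrite seriesSr lerDl.
Qed.

Lemma geometric_step_bound (R : realFieldType) (x x0 y y0 g d q t : R) :
  0 < g -> d < 1 -> q < 1 -> 0 <= t ->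
  (1 - d) * x <= g * y -> y <= t * y0 -> g * (1 - q) * y0 <= (1 + d) * x0 ->
  x <= (1 + d) / ((1 - d) * (1 - q)) * t * x0.
Proof.
move=> g_gt0 d_lt1 q_lt1 t_ge0 hx hy hy0.
have d1_gt0 : 0 < 1 - d by rewrite subr_gt0.
have q1_gt0 : 0 < 1 - q by rewrite subr_gt0.
have -> : (1 + d) / ((1 - d) * (1 - q)) * t * x0 =
          g * t * ((1 + d) * x0 / (g * (1 - q))) / (1 - d).
  by field; rewrite !gt_eqF.
rewrite ler_pdivlMr // mulrC; apply: le_trans hx _.
rewrite -mulrA ler_pM2l //; apply: le_trans hy _; apply: ler_wpM2l => //.
by rewrite ler_pdivlMr ?mulr_gt0 // mulrC.
Qed.

Section IGPPAIteration.
Variables (R : realType) (n : nat) (T : 'cV[R]_n -> 'cV[R]_n -> Prop).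
Variables (M : 'M[R]_n) (lmin : R).
Hypotheses (hT : maximal_monotone T) (Om_neq0 : zeros T !=set0) (hM : sym_posdef M).
Hypotheses (hMmax : is_lambda_max M 1) (hMmin : is_lambda_min M lmin).
Variables (z : nat -> 'cV[R]_n) (gamma delta : R) (sigma eta : nat -> R).
Hypotheses (gamma_gt0 : 0 < gamma) (gamma_lt2 : gamma < 2).
Hypotheses (delta_ge0 : 0 <= delta) (delta_lt1 : delta < 1).
Hypotheses (eta_ge0 : forall k, 0 <= eta k) (eta_cvg : cvgn (series eta)).
Hypothesis step : forall k, IGPPAstep T (z k) (sigma k) (eta k) delta gamma M (z k.+1).
Variables (zbar0 : 'cV[R]_n) (r kappa alpha : R).
Hypothesis Om_zbar0 : zeros T zbar0.
Hypothesis zbar0_nearest :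
  forall d, zeros T d -> nrmM M (zbar0 - z 0) <= nrmM M (d - z 0).
Hypothesis r_ge :
  nrm zbar0 + (distM M (z 0) (zeros T) + gamma * limn (series eta)) / lmin <= r.
Hypotheses (kappa_gt0 : 0 < kappa) (alpha_gt0 : 0 < alpha) (subreg : subreg_at T r kappa).
Hypothesis sigma_ge : forall k, kappa * alpha <= sigma k.
Local Notation N := (nrmM M).
Local Notation D x := (distM M x (zeros T)).
Local Notation rho := ((1 - delta)^-1 *
  (Num.sqrt (1 - Num.min gamma (2 * gamma - gamma ^+ 2) * alpha ^+ 2 / (alpha ^+ 2 + 1))
   + delta * (Num.min gamma 1 / Num.sqrt (alpha ^+ 2 + 1) + 1))).
Local Notation q := (Num.sqrt (1 / (alpha ^+ 2 + 1))).

Let sigma_ge0 k : 0 <= sigma k.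
Proof. by apply: le_trans (sigma_ge k); rewrite mulr_ge0 // ltW. Qed.

Lemma iterates_fejer k : N (z k - zbar0) <= D (z 0) + gamma * series eta k.
Proof.
elim: k => [|k IH].
  rewrite /series /= big_geq // mulr0 addr0 nrmMB.
  by apply: distM_glb => // d Om_d; exact: zbar0_nearest.
apply: le_trans (IGPPAstep_fejer hT hM gamma_gt0 gamma_lt2 (step k) (sigma_ge0 k)
  Om_zbar0) _.
by rewrite seriesSr mulrDr addrA lerD2r.
Qed.

Lemma iterates_ball k x :
  (forall p, zeros T p -> N (x - p) <= N (z k - p)) -> nrm x <= r.
Proof.
move=> x_near; apply: le_trans r_ge.
have := nrm_triangle zbar0 (x - zbar0); rewrite [zbar0 + _]addrC subrK => x_le.
apply: le_trans x_le _; rewrite lerD2l.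
apply: le_trans (nrm_le_nrmM hM hMmax hMmin _) _.
rewrite ler_pM2r ?invr_gt0 ?(lambda_min_gt0 hM hMmin) //.
apply: le_trans (x_near _ Om_zbar0) _; apply: le_trans (iterates_fejer k) _.
by rewrite lerD2l ler_pM2l // series_le_limn.
Qed.

Let rate_ge0 : 0 <= rho.
Proof.
have q_ge0 : 0 <= Num.min gamma 1 / Num.sqrt (alpha ^+ 2 + 1).
  by rewrite divr_ge0 ?sqrtr_ge0 // le_min ler01 andbT ltW.
rewrite mulr_ge0 ?invr_ge0 ?subr_ge0 ?(ltW delta_lt1) //.
by rewrite addr_ge0 ?sqrtr_ge0 // mulr_ge0 // addr_ge0.
Qed.

Lemma iterates_distM_geometric k : D (z k) <= rho ^+ k * D (z 0).
Proof.
elim: k => [|k IH]; first by rewrite expr0 mul1r.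
apply: le_trans (IGPPAstep_distM_contract hT hM Om_neq0 gamma_gt0 gamma_lt2 delta_ge0
  delta_lt1 (step k) hMmax kappa_gt0 alpha_gt0 (sigma_ge k) subreg (@iterates_ball k)) _.
rewrite [_ ^+ k.+1]exprS -[rho * _ * D (z 0)]mulrA.
by apply: ler_wpM2l => //; exact: rate_ge0.
Qed.

Lemma iterates_step_geometric k :
  N (z k.+1 - z k) <= (1 + delta) / ((1 - delta) * (1 - q)) * rho ^+ k * N (z 1 - z 0).
Proof.
have q_lt1 : q < 1.
  rewrite -[ltRHS]sqrtr1 ltr_sqrt ?ltr01 // ltr_pdivrMr ?mul1r ?ltrDr ?exprn_gt0 //.
  by rewrite ltr_wpDl ?sqr_ge0.
apply: (geometric_step_bound gamma_gt0 delta_lt1 q_lt1 (exprn_ge0 k rate_ge0)).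
- exact: (IGPPAstep_le_distM hT hM Om_neq0 gamma_gt0 (step k) (sigma_ge0 k)).
- exact: iterates_distM_geometric.
- exact: (IGPPAstep_ge_distM hT hM Om_neq0 gamma_gt0 (step 0) hMmax kappa_gt0 alpha_gt0
    (sigma_ge 0) subreg (@iterates_ball 0)).
Qed.

End IGPPAIteration.

Theorem corollary2 (R : realType) (n : nat)
  (T : 'cV[R]_n -> 'cV[R]_n -> Prop) (M : 'M[R]_n) (lmin : R)
  (hT : maximal_monotone T) (hOmega : zeros T !=set0)
  (hM : sym_posdef M) (hMmax : is_lambda_max M 1) (hMmin : is_lambda_min M lmin)
  (z : nat -> 'cV[R]_n) (gamma delta : R) (sigma eta : nat -> R)
  (hgamma : 0 < gamma < 2) (hdelta : 0 <= delta < 1 / 2)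
  (hsig0 : forall k, 0 <= sigma k) (heta0 : forall k, 0 <= eta k)
  (heta : cvgn (series eta)) (hsiginf : 0 < inf (range sigma))
  (hstep : forall k, IGPPAstep T (z k) (sigma k) (eta k) delta gamma M (z k.+1))
  (hBMS : bounded_metric_subregular T)
  (zbar0 : 'cV[R]_n) (hzbar0 : zeros T zbar0)
  (hzbar0min : forall d, zeros T d -> nrmM M (zbar0 - z 0) <= nrmM M (d - z 0))
  (r kappa : R)
  (hr : nrm zbar0 + (distM M (z 0) (zeros T) + gamma * limn (series eta)) / lmin <= r)
  (hkappa : 0 < kappa) (hkr : subreg_at T r kappa)
  (alpha : R) (halpha : 0 < alpha)
  (hrho : (1 - delta)^-1 *
     (Num.sqrt (1 - Num.min gamma (2 * gamma - gamma ^+ 2) * alpha ^+ 2 / (alpha ^+ 2 + 1))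
      + delta * (Num.min gamma 1 / Num.sqrt (alpha ^+ 2 + 1) + 1)) < 1)
  (hsigma : forall k, kappa * alpha <= sigma k) :
  let rho := (1 - delta)^-1 *
     (Num.sqrt (1 - Num.min gamma (2 * gamma - gamma ^+ 2) * alpha ^+ 2 / (alpha ^+ 2 + 1))
      + delta * (Num.min gamma 1 / Num.sqrt (alpha ^+ 2 + 1) + 1)) in
  let C := (1 + delta) / ((1 - delta) * (1 - Num.sqrt (1 / (alpha ^+ 2 + 1)))) in
  forall k : nat,
    nrmM M (z k.+1 - z k) <= C * rho ^+ k * nrmM M (z 1 - z 0).
Proof.
move=> rho C k.
have [g_gt0 g_lt2] := andP hgamma; have [d_ge0 d_lt12] := andP hdelta.
have d_lt1 : delta < 1 by lra.
exact: (iterates_step_geometric hT hOmega hM hMmax hMmin g_gt0 g_lt2 d_ge0 d_lt1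
  heta0 heta hstep hzbar0 hzbar0min hr hkappa halpha hkr hsigma).
Qed.
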